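(* Let $w = w_1 w_2 w_3 \cdots$ be any infinite binary word, and define $$r_{\inf}(w) = \liminf_{n \to \infty} \frac{|Z(w^{(n)})|}{n},\quad r_{\sup}(w) = \limsup_{n \to \infty} \frac{|Z(w^{(n)})|}{n},$$ $$R_{\inf}(w) = \liminf_{n \to \infty} \frac{|P(w^{(n)})|}{n},\quad R_{\sup}(w) = \limsup_{n \to \infty} \frac{|P(w^{(n)})|}{n}.$$ Then $$\frac{5 r_{\inf}(w) - 2}{3} \leq R_{\inf}(w) \leq r_{\inf}(w) \quad\text{and}\quad \frac{5 r_{\sup}(w) - 2}{3} \leq R_{\sup}(w) \leq r_{\sup}(w).$$ Moreover, for every real number $2/5 \leq r \leq 1$ there exists an infinite binary word $w$ with $r_{\inf}(w) = r_{\sup}(w) = r$ and $R_{\inf}(w) = R_{\sup}(w) = (5r-2)/3$; and for every real number $0 \leq r \leq 1$ there exists an infinite binary word $w$ with $r_{\inf}(w) = r_{\sup}(w) = r$ and $R_{\inf}(w) = R_{\sup}(w) = r$.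
   Context: For a finite or infinite binary word $w = w_1 w_2 \cdots$ ($w_i \in \{0,1\}$), $\ell(w)$ is its length and $w^{(n)}$ denotes its initial subword of length $n$. $Z(w)$ is the set of indices $i$ with $w_i = 0$. $P(w)$ is the set of indices $i \geq 2$ such that at least one of the following holds: (i) $\ell(w) \geq i$ and $w_{i-1} w_i = 00$; (ii) $\ell(w) \geq i+2$ and $w_{i-1} w_i w_{i+1} w_{i+2} = 0100$; (iii) $\ell(w) \geq i+3$ and $w_{i-1} w_i w_{i+1} w_{i+2} w_{i+3} = 01010$. *)

From HB Require Import structures.
From mathcomp Require Import all_boot all_order all_algebra.
From mathcomp Require Import all_classical all_reals all_analysis.
Set Implicit Arguments. Unset Strict Implicit. Unset Printing Implicit Defensive.
Import Order.TTheory GRing.Theory Num.Theory.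

(* An infinite binary word w = w_1 w_2 ... is a function w : nat -> bool,
   letter w_i being [w i] for i >= 1 (the value [w 0] is ignored).
   Letter 0 is encoded by [false], letter 1 by [true]. *)
Definition word := nat -> bool.

Definition is0 (w : word) (i : nat) : bool := ~~ w i.

Definition Zcount (w : word) (n : nat) : nat := count (is0 w) (iota 1 n).

(* membership of index i in P(w^(n)), for 2 <= i (and i <= n for (i)) *)
Definition inP (w : word) (n i : nat) : bool :=
  [|| (i <= n) && is0 w i.-1 && is0 w i,
      (i + 2 <= n) && [&& is0 w i.-1, w i, is0 w i.+1 & is0 w i.+2]
    | (i + 3 <= n) && [&& is0 w i.-1, w i, is0 w i.+1, w i.+2 & is0 w i.+3]].

Definition Pcount (w : word) (n : nat) : nat := count (inP w n) (iota 2 n.-1).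

Local Open Scope ring_scope.

Definition zratio (R : realType) (w : word) (n : nat) : R := (Zcount w n)%:R / n%:R.
Definition pratio (R : realType) (w : word) (n : nat) : R := (Pcount w n)%:R / n%:R.

Definition r_inf (R : realType) (w : word) : R := limn_inf (zratio R w).
Definition r_sup (R : realType) (w : word) : R := limn_sup (zratio R w).
Definition R_inf (R : realType) (w : word) : R := limn_inf (pratio R w).
Definition R_sup (R : realType) (w : word) : R := limn_sup (pratio R w).

From HB Require Import structures.
From mathcomp Require Import all_boot all_order all_algebra.
From mathcomp Require Import all_classical all_reals all_analysis.
From mathcomp Require Import zify ring lra.
From Stdlib Require Import PeanoNat.
Set Implicit Arguments. Unset Strict Implicit. Unset Printing Implicit Defensive.
Import Order.TTheory GRing.Theory Num.Theory.
Import numFieldNormedType.Exports.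

(* Appending a letter changes |Z| and |P| by amounts that depend only on the
   last five letters, so |P(w^(n))| <= |Z(w^(n))| and
   5 |Z(w^(n))| <= 3 |P(w^(n))| + 2 n + 4 follow by induction on n once a
   suitable potential of the last four letters is added; dividing by n and
   passing to lim inf and lim sup gives the inequalities.
   The extremal words are made of blocks: letters s^2 + 1, ..., (s + 1)^2
   are about rho (2 s + 1) zeros followed by ones.  There are O(sqrt n)
   changes of letter up to n and almost every zero is preceded by a zero, so
   |P| and |Z| are both rho n + O(sqrt n).  Replacing the ones by the periodic
   pattern 1 0 1 0 1, of zero density 2/5 and meeting no index of P, raises
   the zero density to r = rho + 2 (1 - rho) / 5 while |P| stays close to
   rho n = (5 r - 2) n / 3. *)

Lemma count_iotaSr (p : pred nat) m k :
  count p (iota m k.+1) = count p (iota m k) + p (m + k).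
Proof. by rewrite -addn1 iotaD count_cat /= addn0. Qed.

Lemma count_iota_ltn (p : pred nat) m k b :
  count (fun i => p i && (i < b)) (iota m k) = count p (iota m (minn k (b - m))).
Proof.
elim: k m => [|k IHk] m /=; first by rewrite min0n.
case: (ltnP m b) => [lt_mb|le_bm].
  have -> : minn k.+1 (b - m) = (minn k (b - m.+1)).+1.
    by rewrite -minnSS; congr minn; lia.
  by rewrite /= IHk andbT.
have [bm1 bm] : b - m.+1 = 0 /\ b - m = 0 by lia.
by rewrite andbF IHk bm1 bm !minn0.
Qed.

Lemma count_or3 T (a b c : pred T) s :
  (forall x, a x -> ~~ b x && ~~ c x) -> (forall x, b x -> ~~ c x) ->
  count (fun x => [|| a x, b x | c x]) s = count a s + count b s + count c s.
Proof.
move=> ab bc; elim: s => //= x s ->.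
case ax: (a x); first by case/andP: (ab x ax) => /negbTE -> /negbTE ->; lia.
case bx: (b x); first by rewrite (negbTE (bc x bx)); lia.
by case: (c x) => /=; lia.
Qed.

Lemma ZcountS w n : Zcount w n.+1 = Zcount w n + is0 w n.+1.
Proof. by rewrite /Zcount count_iotaSr add1n. Qed.

Lemma Zcount_le w n : Zcount w n <= n.
Proof. by rewrite /Zcount (leq_trans (count_size _ _)) // size_iota. Qed.

Definition P00 (w : word) i := is0 w i.-1 && is0 w i.
Definition P0100 (w : word) i := [&& is0 w i.-1, w i, is0 w i.+1 & is0 w i.+2].
Definition P01010 (w : word) i := [&& is0 w i.-1, w i, is0 w i.+1, w i.+2 & is0 w i.+3].

Lemma Pcount_split w n : Pcount w n =
  count (P00 w) (iota 2 n.-1) + count (P0100 w) (iota 2 (n - 3)) +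
  count (P01010 w) (iota 2 (n - 4)).
Proof.
have inPE : inP w n =1 fun i =>
    [|| P00 w i && (i < n.+1), P0100 w i && (i < n - 1) | P01010 w i && (i < n - 2)].
  move=> i; rewrite /inP ltnS.
  have -> : (i + 2 <= n) = (i < n - 1) by apply/idP/idP; lia.
  have -> : (i + 3 <= n) = (i < n - 2) by apply/idP/idP; lia.
  rewrite /P00 /P0100 /P01010.
  by case: (i <= n); case: (i < n - 1); case: (i < n - 2); rewrite /= ?andbT ?andbF.
rewrite /Pcount (eq_count inPE) count_or3.
- by rewrite !count_iota_ltn; congr (_ + _ + _); congr (count _ (iota _ _)); lia.
- move=> i; rewrite /P00 /P0100 /P01010 /is0.
  by case: (w i); case: (w i.+2); rewrite /= ?andbF.
- move=> i; rewrite /P0100 /P01010 /is0.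
  by case: (w i.+2); rewrite /= ?andbF.
Qed.

(* The new elements of P when a letter e is appended to a prefix ending in
   a b c d: the last index, of type (i), and the indices two and three places
   back, of types (ii) and (iii). *)
Definition Pinc (a b c d e : bool) : nat :=
  (~~ d && ~~ e) + (~~ b && c && ~~ d && ~~ e) + (~~ a && b && ~~ c && d && ~~ e).

(* For n < 4 the truncated subtractions n - 3, ... hit the letter w 0, which
   is not part of the word and must not look like a zero. *)
Lemma PcountS w n : w 0 = true ->
  Pcount w n.+1 = Pcount w n + Pinc (w (n - 3)) (w (n - 2)) (w (n - 1)) (w n) (w n.+1).
Proof.
move=> w0; rewrite !Pcount_split.
case: n => [|[|[|[|n]]]].
1-4: rewrite /Pinc /P00 /P0100 /P01010 /is0 /= w0;
  by case: (w 1); case: (w 2); case: (w 3); case: (w 4).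
rewrite (count_iotaSr (P00 w) 2 n.+3) (count_iotaSr (P0100 w) 2 n.+1).
rewrite (count_iotaSr (P01010 w) 2 n) !subSS !subn0.
rewrite /Pinc /P00 /P0100 /P01010 /is0 /= !addSn !add0n.
by case: (w n.+1); case: (w n.+2); case: (w n.+3); case: (w n.+4);
   case: (w n.+4.+1); rewrite /=; lia.
Qed.

(* Zeros at the end of the prefix that are the images of future elements of P,
   of types (ii) and (iii), under the injection i |-> i + w_i of P into Z. *)
Definition reserved_zeros (a b c d : bool) : nat :=
  (~~ b && c && ~~ d) + (~~ a && b && ~~ c && d).

Lemma Pcount_reserved_le_Zcount w n : w 0 = true ->
  Pcount w n + reserved_zeros (w (n - 3)) (w (n - 2)) (w (n - 1)) (w n) <= Zcount w n.
Proof.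
move=> w0; elim: n => [|n IHn]; first by rewrite /Zcount /Pcount /= w0.
rewrite ZcountS PcountS // !subSS subn0 /Pinc /is0 /reserved_zeros in IHn *.
move: IHn; case: (w (n - 3)); case: (w (n - 2)); case: (w (n - 1)); case: (w n);
  case: (w n.+1); rewrite /=; lia.
Qed.

(* A solution of the 32 linear constraints that ZcountS and PcountS impose on
   a potential for 5 |Z| <= 3 |P| + 2 n. *)
Definition slack_potential (a b c d : bool) : nat :=
  if d then ~~ c * (1 + (~~ a && b)) else 3 + (~~ b && c).

Lemma five_Zcount_le_slack w n : w 0 = true ->
  5 * Zcount w n <=
    3 * Pcount w n + 2 * n + slack_potential (w (n - 3)) (w (n - 2)) (w (n - 1)) (w n).
Proof.
move=> w0; elim: n => [|n IHn]; first by rewrite /Zcount /= w0.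
rewrite ZcountS PcountS // !subSS subn0 /Pinc /is0 /slack_potential in IHn *.
move: IHn; case: (w (n - 3)); case: (w (n - 2)); case: (w (n - 1)); case: (w n);
  case: (w n.+1); rewrite /=; lia.
Qed.

Definition pad1 (w : word) : word := fun i => if i is 0 then true else w i.

Lemma Zcount_pad1 w n : Zcount (pad1 w) n = Zcount w n.
Proof. by apply: eq_in_count => -[|i]; rewrite mem_iota. Qed.

Lemma Pcount_pad1 w n : Pcount (pad1 w) n = Pcount w n.
Proof. by apply: eq_in_count => -[|[|i]]; rewrite mem_iota. Qed.

Lemma Pcount_le_Zcount w n : Pcount w n <= Zcount w n.
Proof.
rewrite -Zcount_pad1 -Pcount_pad1.
exact: leq_trans (leq_addr _ _) (@Pcount_reserved_le_Zcount (pad1 w) n erefl).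
Qed.

Lemma five_Zcount_le w n : 5 * Zcount w n <= 3 * Pcount w n + 2 * n + 4.
Proof.
rewrite -Zcount_pad1 -Pcount_pad1.
apply: leq_trans (@five_Zcount_le_slack (pad1 w) n erefl) _; rewrite leq_add2l.
rewrite /slack_potential.
by case: (pad1 w n); case: (pad1 w (n - 1)); case: (pad1 w (n - 2)); case: (pad1 w (n - 3)).
Qed.

Lemma sqrtn_bounds n : Nat.sqrt n * Nat.sqrt n <= n < (Nat.sqrt n).+1 * (Nat.sqrt n).+1.
Proof.
have [lo hi] := Nat.sqrt_spec n (Nat.le_0_l n).
by apply/andP; split; [apply/ssrnat.leP | apply/ssrnat.ltP]; lia.
Qed.

Lemma sqrtn_unique n s : s * s <= n < s.+1 * s.+1 -> Nat.sqrt n = s.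
Proof. by case/andP=> /ssrnat.leP lo /ssrnat.ltP hi; apply: Nat.sqrt_unique; lia. Qed.

Lemma leq_sqrtn s n : s * s <= n -> s <= Nat.sqrt n.
Proof. by move/ssrnat.leP/Nat.sqrt_le_square/ssrnat.leP. Qed.

Lemma sqrtn_mono m n : m <= n -> Nat.sqrt m <= Nat.sqrt n.
Proof. by move/ssrnat.leP/Nat.sqrt_le_mono/ssrnat.leP. Qed.

Lemma sqrtnS n : Nat.sqrt n.+1 = Nat.sqrt n \/
  Nat.sqrt n.+1 = (Nat.sqrt n).+1 /\ n.+1 = (Nat.sqrt n).+1 * (Nat.sqrt n).+1.
Proof.
have /andP[lo hi] := sqrtn_bounds n; set s := Nat.sqrt n in lo hi *.
have [lt_n1|ge_n1] := ltnP n.+1 (s.+1 * s.+1).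
  by left; apply: sqrtn_unique; rewrite lt_n1 andbT; lia.
have sq : n.+1 = s.+1 * s.+1 by lia.
by right; split => //; apply: sqrtn_unique; rewrite sq leqnn /=; nia.
Qed.

Definition changes (w : word) n := count (fun m => w m.+1 != w m) (iota 0 n).

Lemma changesS w n : changes w n.+1 = changes w n + (w n.+1 != w n).
Proof. by rewrite /changes count_iotaSr add0n. Qed.

(* A zero w_i outside P is not preceded by a zero, so w_(i-1) w_i is a change. *)
Lemma Zcount_le_Pcount_changes w n : w 0 = true ->
  Zcount w n <= Pcount w n + changes w n.
Proof.
move=> w0; elim: n => [|n IHn]; first by rewrite /Zcount.
rewrite ZcountS PcountS // changesS /Pinc /is0.
move: IHn; case: (w (n - 3)); case: (w (n - 2)); case: (w (n - 1)); case: (w n);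
  case: (w n.+1); rewrite /=; lia.
Qed.

Section BlockWord.
Variable f : nat -> nat.

Definition block_zeros s := f s.+1 - f s.

(* Letters s^2 + 1, ..., (s + 1)^2 form block s: block_zeros s zeros, then ones. *)
Definition block_word : word := fun i =>
  if i is j.+1 then block_zeros (Nat.sqrt j) <= j - Nat.sqrt j * Nat.sqrt j else true.

Lemma changes_block_wordS n :
  changes block_word n.+1 + ~~ block_word n.+1 <= (Nat.sqrt n).*2 + 2.
Proof.
elim: n => [|n IHn]; first by rewrite changesS; case: (block_word 1).
rewrite changesS; move: IHn; rewrite /=.
have /andP[lo hi] := sqrtn_bounds n.
case: (sqrtnS n) => [->|[-> _]]; set s := Nat.sqrt n in lo hi *.
  have [le_n|lt_n] := leqP (block_zeros s) (n - s * s);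
  have [le_n1|lt_n1] := leqP (block_zeros s) (n.+1 - s * s); rewrite /=; lia.
by case: (block_zeros s.+1 <= _); case: (block_zeros s <= _); rewrite /=; lia.
Qed.

Lemma changes_block_word n : changes block_word n <= (Nat.sqrt n).*2 + 2.
Proof.
case: n => [|n] //; have := changes_block_wordS n.
have := sqrtn_mono (leqnSn n); lia.
Qed.

Hypothesis f0 : f 0 = 0.
Hypothesis f_mono : forall s, f s <= f s.+1.
Hypothesis f_step : forall s, f s.+1 <= f s + s.*2.+1.

Lemma Zcount_block_word n : Zcount block_word n =
  f (Nat.sqrt n) + minn (block_zeros (Nat.sqrt n)) (n - Nat.sqrt n * Nat.sqrt n).
Proof.
elim: n => [|n IHn]; first by rewrite /Zcount /= (@sqrtn_unique 0 0) // f0.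
rewrite ZcountS IHn /is0 /=.
have /andP[lo hi] := sqrtn_bounds n.
move: (f_mono (Nat.sqrt n)) (f_step (Nat.sqrt n)); rewrite /block_zeros.
case: (sqrtnS n) => [->|[-> sq]]; set s := Nat.sqrt n in lo hi *.
  have -> : n.+1 - s * s = (n - s * s).+1 by lia.
  by case: (leqP (f s.+1 - f s) (n - s * s)) => /=; lia.
have -> : n.+1 - s.+1 * s.+1 = 0 by lia.
have -> : n - s * s = s.*2 by nia.
by case: (leqP (f s.+1 - f s) s.*2) => /=; lia.
Qed.

End BlockWord.

(* Keeps the letters of w at the positions 0, 2, 4 (mod 5) and puts zeros
   elsewhere: inside a run of ones of w this is the pattern 1 0 1 0 1, of zero
   density 2/5 and containing no index of P. *)
Definition mask5 (w : word) : word := fun i => w i && ~~ odd (i %% 5).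

(* 2 plus the excess of zeros over 2/5 of the length in the first k letters of
   the period 1 0 1 0 1. *)
Definition phase_excess (k : nat) : nat := nth 0 [:: 2; 0; 3; 1; 4] k.

Lemma phase_excess_le k : phase_excess k <= 4.
Proof. by case: k => [|[|[|[|[|k]]]]] //; rewrite /phase_excess /= nth_nil. Qed.

Lemma Zcount_mask5_potential w n : w 0 = true ->
  (n.*2 + 3 * Zcount w n + w n * phase_excess (n.+1 %% 5) + 2 <=
     5 * Zcount (mask5 w) n + (w n).*2 + 4 * changes w n) /\
  (5 * Zcount (mask5 w) n + (w n).*2 <=
     n.*2 + 3 * Zcount w n + w n * phase_excess (n.+1 %% 5) + 2 + 4 * changes w n).
Proof.
move=> w0; elim: n => [|n [IHlo IHhi]]; first by rewrite /Zcount /changes /= w0.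
rewrite !ZcountS changesS /is0.
have -> : mask5 w n.+1 = w n.+1 && ~~ odd (n.+1 %% 5) by [].
have -> : n.+2 %% 5 = (if n.+1 %% 5 == 4 then 0 else (n.+1 %% 5).+1).
  by case: eqP; lia.
have : n.+1 %% 5 < 5 by lia.
move: IHlo IHhi; set k := n.+1 %% 5; move: (w n) (w n.+1) => a b.
case: k => [|[|[|[|[|k]]]]] // IHlo IHhi _;
  move: IHlo IHhi; case: a; case: b; rewrite /= /phase_excess /=; lia.
Qed.

Lemma Zcount_mask5 w n : w 0 = true ->
  n.*2 + 3 * Zcount w n <= 5 * Zcount (mask5 w) n + 4 * changes w n /\
  5 * Zcount (mask5 w) n <= n.*2 + 3 * Zcount w n + 4 * changes w n + 6.
Proof.
move=> /(Zcount_mask5_potential n) [lo hi].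
have := phase_excess_le (n.+1 %% 5).
by case: (w n) lo hi => /= lo hi ex; split; lia.
Qed.

Definition steady (w : word) m := (3 < m) &&
  [&& w (m - 3) == w (m - 2), w (m - 2) == w (m - 1), w (m - 1) == w m & w m == w m.+1].

(* How many windows w_(m-3) ... w_(m+1) with m >= n still contain the last
   change of the prefix a b c d = w_(n-3) ... w_n. *)
Definition pending_windows (a b c d : bool) : nat :=
  if c != d then 3 else if b != c then 2 else if a != b then 1 else 0.

Lemma count_unsteady_pending w n :
  count [predC steady w] (iota 0 n) +
    pending_windows (w (n - 3)) (w (n - 2)) (w (n - 1)) (w n) <= 4 * changes w n + minn n 4.
Proof.
elim: n => [|n IHn]; first by rewrite /pending_windows !eqxx.
rewrite count_iotaSr add0n changesS !subSS subn0 /pending_windows.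
have -> : [predC steady w] n = ~~ steady w n by [].
rewrite [steady w n]/steady.
have -> : minn n.+1 4 = minn n 4 + (n < 4) by case: (ltnP n 4); lia.
move: IHn; rewrite /pending_windows; case: (ltnP n 4) => _;
  case: (w (n - 3)); case: (w (n - 2)); case: (w (n - 1)); case: (w n);
  case: (w n.+1); rewrite /=; lia.
Qed.

Lemma count_unsteady w n : count [predC steady w] (iota 0 n) <= 4 * changes w n + 4.
Proof.
by have := count_unsteady_pending w n; have := geq_minr n 4; lia.
Qed.

(* The least potential for 3 |P| <= 5 |Z| on the masked word that gains 2 at
   every step where the window of w is steady (found by value iteration). *)
Definition mask5_potential (a b c d : bool) : nat :=
  match a, b, c, d with
  | false, false, true, false => 2
  | false, true, false, true => 2
  | false, true, true, false => 3
  | true, false, true, false => 4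
  | true, true, false, true => 1
  | true, true, true, false => 1
  | _, _, _, _ => 0
  end.

Lemma mask5_steady_step w m : steady w m ->
  3 * Pinc (mask5 w (m - 3)) (mask5 w (m - 2)) (mask5 w (m - 1)) (mask5 w m)
      (mask5 w m.+1) + 2 +
    mask5_potential (mask5 w (m - 2)) (mask5 w (m - 1)) (mask5 w m) (mask5 w m.+1) <=
  5 * ~~ mask5 w m.+1 +
    mask5_potential (mask5 w (m - 3)) (mask5 w (m - 2)) (mask5 w (m - 1)) (mask5 w m).
Proof.
case/andP=> m3 /and4P[/eqP e1 /eqP e2 /eqP e3 /eqP e4].
rewrite /mask5 -e4 -e3 -e2 -e1.
have : m %% 5 < 5 by lia.
have -> : (m - 3) %% 5 = (m %% 5 + 2) %% 5 by lia.
have -> : (m - 2) %% 5 = (m %% 5 + 3) %% 5 by lia.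
have -> : (m - 1) %% 5 = (m %% 5 + 4) %% 5 by lia.
have -> : m.+1 %% 5 = (m %% 5 + 1) %% 5 by lia.
by case: (m %% 5) => [|[|[|[|[|k]]]]] //= _; case: (w (m - 3)); rewrite /Pinc /=.
Qed.

Lemma three_Pcount_mask5_potential w n : w 0 = true ->
  3 * Pcount (mask5 w) n + n.*2 +
    mask5_potential (mask5 w (n - 3)) (mask5 w (n - 2)) (mask5 w (n - 1)) (mask5 w n)
  <= 5 * Zcount (mask5 w) n + (count [predC steady w] (iota 0 n)).*2.
Proof.
move=> w0; have mw0 : mask5 w 0 = true by rewrite /mask5 w0.
elim: n => [|n IHn]; first by rewrite /Zcount /Pcount /= mw0.
rewrite ZcountS PcountS // count_iotaSr add0n !subSS subn0 /is0 /=.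
case st: (steady w n); last first.
  move: IHn; rewrite /Pinc.
  case: (mask5 w (n - 3)); case: (mask5 w (n - 2)); case: (mask5 w (n - 1));
    case: (mask5 w n); case: (mask5 w n.+1); rewrite /=; lia.
have := mask5_steady_step st; rewrite /=; lia.
Qed.

Lemma three_Pcount_mask5_le w n : w 0 = true ->
  3 * Pcount (mask5 w) n + n.*2 <= 5 * Zcount (mask5 w) n + 8 * changes w n + 8.
Proof.
move=> /(three_Pcount_mask5_potential n) le_pot.
have := count_unsteady w n; lia.
Qed.

Local Open Scope classical_set_scope.
Local Open Scope ring_scope.

Section LimnInfSup.
Variable R : realType.
Implicit Types (u v : nat -> R) (a l : R).

Lemma norm_le_bounded_fun u B : (forall n, `|u n| <= B) -> bounded_fun u.
Proof.
move=> uB; rewrite /= /bounded_near; near=> M => n _ /=.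
apply: le_trans (uB n) _; near: M; exact: nbhs_pinfty_ge (num_real B).
Unshelve. all: end_near. Qed.

Lemma bounded_fun_norm_le u : bounded_fun u -> exists B, forall n, `|u n| <= B.
Proof.
move=> [M [Mreal]]/(_ (`|M| + 1)).
rewrite (le_lt_trans (ler_norm _)) ?ltrDl// => /(_ erefl) uM.
by exists (`|M| + 1) => n; apply: uM.
Qed.

Lemma bounded_funZ a u : bounded_fun u -> bounded_fun (fun n => a * u n).
Proof.
move=> /bounded_fun_norm_le [B uB]; apply: (@norm_le_bounded_fun _ (`|a| * B)) => n.
by rewrite normrM ler_wpM2l.
Qed.

Lemma bounded_is_cvg_infs u : bounded_fun u -> cvgn (infs u).
Proof.
move=> bu; apply: nondecreasing_is_cvgn; last exact: bounded_fun_has_ubound_infs.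
exact/nondecreasing_infs/bounded_fun_has_lbound.
Qed.

Lemma bounded_is_cvg_sups u : bounded_fun u -> cvgn (sups u).
Proof.
move=> bu; apply: nonincreasing_is_cvgn; last exact: bounded_fun_has_lbound_sups.
exact/nonincreasing_sups/bounded_fun_has_ubound.
Qed.

Lemma infsZ_ge a u n : 0 < a -> has_lbound (range u) ->
  a * infs u n <= infs (fun k => a * u k) n.
Proof.
move=> a0 lbu; apply: lb_le_inf; first by exists (a * u n); exists n => /=.
move=> _ [k /= kn <-]; rewrite ler_pM2l //; apply: ge_inf.
  exact: has_lbound_sdrop.
by exists k.
Qed.

Lemma supsZ_le a u n : 0 < a -> has_ubound (range u) ->
  sups (fun k => a * u k) n <= a * sups u n.
Proof.
move=> a0 ubu; apply: ge_sup; first by exists (a * u n); exists n => /=.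
move=> _ [k /= kn <-]; rewrite ler_pM2l //; apply: ub_le_sup.
  exact: has_ubound_sdrop.
by exists k.
Qed.

Lemma mulKVr_fun a u : 0 < a -> (fun k => a^-1 * (a * u k)) = u.
Proof. by move=> a0; apply/funext => k; rewrite mulKf ?gt_eqF. Qed.

Lemma limn_infZ a u : 0 < a -> bounded_fun u ->
  limn_inf (fun k => a * u k) = a * limn_inf u.
Proof.
move=> a0 bu.
have infsZ : infs (fun k => a * u k) = (fun n => a * infs u n).
  apply/funext => n; apply/eqP; rewrite eq_le infsZ_ge ?andbT //;
    last exact: bounded_fun_has_lbound.
  have := @infsZ_ge a^-1 (fun k => a * u k) n; rewrite mulKVr_fun // invr_gt0.
  move=> /(_ a0 (bounded_fun_has_lbound (bounded_funZ a bu))).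
  by rewrite -(ler_pM2l a0) mulrA mulfV ?mul1r // gt_eqF.
have := bounded_is_cvg_infs bu.
by rewrite /limn_inf infsZ => cu; apply/cvg_lim => //; apply: cvgMl_tmp.
Qed.

Lemma limn_supZ a u : 0 < a -> bounded_fun u ->
  limn_sup (fun k => a * u k) = a * limn_sup u.
Proof.
move=> a0 bu.
have supsZ : sups (fun k => a * u k) = (fun n => a * sups u n).
  apply/funext => n; apply/eqP; rewrite eq_le supsZ_le //;
    last exact: bounded_fun_has_ubound.
  have := @supsZ_le a^-1 (fun k => a * u k) n; rewrite mulKVr_fun // invr_gt0.
  move=> /(_ a0 (bounded_fun_has_ubound (bounded_funZ a bu))).
  by rewrite -(ler_pM2l a0) mulrA mulfV ?mul1r // gt_eqF.
have := bounded_is_cvg_sups bu.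
by rewrite /limn_sup supsZ => cu; apply/cvg_lim => //; apply: cvgMl_tmp.
Qed.

Lemma ler_limn_inf u v : bounded_fun u -> bounded_fun v ->
  (forall n, u n <= v n) -> limn_inf u <= limn_inf v.
Proof.
move=> bu bv uv.
apply: ler_lim; [exact: bounded_is_cvg_infs | exact: bounded_is_cvg_infs |].
apply: nearW => n; apply: lb_le_inf; first by exists (v n); exists n => /=.
move=> _ [k /= kn <-]; apply: le_trans (uv k); apply: ge_inf.
  exact/has_lbound_sdrop/bounded_fun_has_lbound.
by exists k.
Qed.

Lemma ler_limn_sup u v : bounded_fun u -> bounded_fun v ->
  (forall n, u n <= v n) -> limn_sup u <= limn_sup v.
Proof.
move=> bu bv uv.
apply: ler_lim; [exact: bounded_is_cvg_sups | exact: bounded_is_cvg_sups |].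
apply: nearW => n; apply: ge_sup; first by exists (u n); exists n => /=.
move=> _ [k /= kn <-]; apply: le_trans (uv k) _; apply: ub_le_sup.
  exact/has_ubound_sdrop/bounded_fun_has_ubound.
by exists k.
Qed.

Lemma limn_infD_cvg u v l : bounded_fun u -> v @ \oo --> l ->
  limn_inf (fun n => u n + v n) = limn_inf u + l.
Proof.
move=> bu vl.
have bv : bounded_fun v by apply: cvg_seq_bounded; apply/cvg_ex; exists l.
have [infv _] := cvg_limn_inf_sup vl.
apply/eqP; rewrite eq_le; apply/andP; split; last first.
  by rewrite -infv; exact: (le_limn_infD bu bv).
have [infNv _] := cvg_limn_inf_sup (cvgN vl).
have := le_limn_infD (bounded_funD bu bv) (bounded_funN bv).
have -> : (u \+ v) \+ - v = u by apply/funext => n /=; rewrite addrK.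
by rewrite infNv -lerBrDr opprK.
Qed.

Lemma limn_supD_cvg u v l : bounded_fun u -> v @ \oo --> l ->
  limn_sup (fun n => u n + v n) = limn_sup u + l.
Proof.
move=> bu vl.
have bv : bounded_fun v by apply: cvg_seq_bounded; apply/cvg_ex; exists l.
have [_ supv] := cvg_limn_inf_sup vl.
apply/eqP; rewrite eq_le; apply/andP; split.
  by rewrite -supv; exact: (le_limn_supD bu bv).
have [_ supNv] := cvg_limn_inf_sup (cvgN vl).
have := le_limn_supD (bounded_funD bu bv) (bounded_funN bv).
have -> : (u \+ v) \+ - v = u by apply/funext => n /=; rewrite addrK.
by rewrite supNv lerBrDr.
Qed.

Lemma cvg_rate u l (C : R) (s : nat -> nat) : 0 <= C ->
  (forall K, exists N, forall n, (N <= n)%N -> (K <= s n)%N) ->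
  (forall n, (0 < s n)%N -> `|u n - l| <= C / (s n)%:R) -> u @ \oo --> l.
Proof.
move=> C0 s_oo ul; apply/cvgrPdist_le => e e0.
have [N sN] := s_oo (Num.bound (C / e)).+1.
near=> n.
have Ks : ((Num.bound (C / e)).+1 <= s n)%N by apply: sN; near: n; apply: nbhs_infty_ge.
have sn0 : (0 < s n)%N by apply: leq_trans Ks.
rewrite distrC (le_trans (ul n sn0)) // ler_pdivrMr ?ltr0n //.
have : C / e < (s n)%:R.
  apply: lt_le_trans (archi_boundP (divr_ge0 C0 (ltW e0))) _.
  by rewrite ler_nat; apply: leq_trans Ks.
by rewrite ltr_pdivrMr // => /ltW; rewrite mulrC.
Unshelve. all: end_near. Qed.

End LimnInfSup.

Section Densities.
Variable R : realType.
Implicit Types (w : word) (X Y : nat -> R) (r l : R).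

Lemma ratio_ge0_le1 (a n : nat) : (a <= n)%N -> (0 : R) <= (a%:R / n%:R : R) <= 1.
Proof.
case: n => [|n] le_an; first by rewrite invr0 mulr0 lexx ler01.
by rewrite divr_ge0 //= ler_pdivrMr ?ltr0n // mul1r ler_nat.
Qed.

Lemma bounded_zratio w : bounded_fun (zratio R w).
Proof.
apply: (@norm_le_bounded_fun _ _ 1) => n.
by have /andP[ge0 le1] := ratio_ge0_le1 (Zcount_le w n); rewrite ger0_norm.
Qed.

Lemma bounded_pratio w : bounded_fun (pratio R w).
Proof.
apply: (@norm_le_bounded_fun _ _ 1) => n.
have /andP[ge0 le1] := ratio_ge0_le1 (leq_trans (Pcount_le_Zcount w n) (Zcount_le w n)).
by rewrite ger0_norm.
Qed.

Lemma pratio_le_zratio w n : pratio R w n <= zratio R w n.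
Proof. by rewrite ler_wpM2r ?invr_ge0 // ler_nat Pcount_le_Zcount. Qed.

Lemma pratio_ge_zratio w n :
  5 / 3 * zratio R w n + (- (2 / 3) - (4 / 3) / n%:R) <= pratio R w n.
Proof.
rewrite /pratio /zratio; case: n => [|n]; first by rewrite !invr0 !mulr0; lra.
move: (Zcount w n.+1) (Pcount w n.+1) (five_Zcount_le w n.+1) => z p.
rewrite -(ler_nat R) !natrD !natrM => le_zp.
have n0 : (0 : R) < n.+1%:R by rewrite ltr0n.
have -> : 5 / 3 * (z%:R / n.+1%:R) + (- (2 / 3) - 4 / 3 / n.+1%:R) =
    (5 / 3 * z%:R - 2 / 3 * n.+1%:R - 4 / 3) / n.+1%:R :> R.
  by field; rewrite gt_eqF.
by rewrite ler_pM2r ?invr_gt0 //; lra.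
Qed.

Lemma cvg_divn0 (c : R) : 0 <= c -> (fun n : nat => c / n%:R) @ \oo --> 0.
Proof.
move=> c0; apply: (@cvg_rate _ _ _ c id) => //; first by move=> K; exists K.
by move=> n _; rewrite subr0 ger0_norm // divr_ge0.
Qed.

Lemma limn_ratios_bounds w :
  (5 * r_inf R w - 2) / 3 <= R_inf R w /\ R_inf R w <= r_inf R w /\
  (5 * r_sup R w - 2) / 3 <= R_sup R w /\ R_sup R w <= r_sup R w.
Proof.
have bz := bounded_zratio w; have bp := bounded_pratio w.
have bz5 := bounded_funZ (5 / 3) bz.
have err_cvg : (fun n : nat => - (2 / 3) - (4 / 3) / n%:R) @ \oo --> (- (2 / 3) : R).
  rewrite -[X in _ --> X]subr0; apply: cvgB; first exact: cvg_cst.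
  by apply: cvg_divn0; lra.
have blow : bounded_fun (fun n => 5 / 3 * zratio R w n + (- (2 / 3) - (4 / 3) / n%:R)).
  by apply: bounded_funD bz5 _; apply: cvg_seq_bounded; apply/cvg_ex; eexists; exact: err_cvg.
have pos53 : (0 : R) < 5 / 3 by lra.
split; [|split; [|split]].
- have := ler_limn_inf blow bp (pratio_ge_zratio w).
  by rewrite (limn_infD_cvg bz5 err_cvg) limn_infZ // /R_inf /r_inf; lra.
- exact: ler_limn_inf bp bz (pratio_le_zratio w).
- have := ler_limn_sup blow bp (pratio_ge_zratio w).
  by rewrite (limn_supD_cvg bz5 err_cvg) limn_supZ // /R_sup /r_sup; lra.
- exact: ler_limn_sup bp bz (pratio_le_zratio w).
Qed.

Lemma limits_of_cvg w (a b : R) :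
  zratio R w @ \oo --> a -> pratio R w @ \oo --> b ->
  r_inf R w = a /\ r_sup R w = a /\ R_inf R w = b /\ R_sup R w = b.
Proof.
move=> za pb; have [zi zs] := cvg_limn_inf_sup za; have [pi ps] := cvg_limn_inf_sup pb.
by rewrite /r_inf /r_sup /R_inf /R_sup zi zs pi ps.
Qed.

Definition near_linear X l :=
  exists2 C, 0 <= C & forall n, `|X n - l * n%:R| <= C * ((Nat.sqrt n)%:R + 1).

Lemma near_linear_cvg X l : near_linear X l -> (fun n => X n / n%:R) @ \oo --> l.
Proof.
move=> [C C0 XC]; apply: (@cvg_rate _ _ _ (2 * C) Nat.sqrt).
- exact: mulr_ge0.
- by move=> K; exists (K * K)%N => n; apply: leq_sqrtn.
move=> n sn0; have /andP[lo _] := sqrtn_bounds n; set s := Nat.sqrt n in lo sn0 *.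
have n0 : (0 < n)%N by apply: leq_trans lo; rewrite muln_gt0 sn0.
have nR : (0 : R) < n%:R by rewrite ltr0n.
have sR : (1 : R) <= s%:R by rewrite ler1n.
have -> : X n / n%:R - l = (X n - l * n%:R) / n%:R by field; rewrite gt_eqF.
rewrite normrM normfV normr_nat ler_pdivrMr //; apply: le_trans (XC n) _.
rewrite mulrAC ler_pdivlMr ?ltr0n //.
have ssn : s%:R * s%:R <= n%:R :> R by rewrite -natrM ler_nat.
have : 0 <= C * (s%:R * s%:R - s%:R) by rewrite mulr_ge0 // subr_ge0; nra.
have : 0 <= C * (n%:R - s%:R * s%:R) by rewrite mulr_ge0 // subr_ge0.
by nra.
Qed.

Lemma near_linear_affine X Y l (a b K : R) : 0 <= K -> near_linear X l ->
  (forall n, `|Y n - (a * X n + b * n%:R)| <= K * ((Nat.sqrt n)%:R + 1)) ->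
  near_linear Y (a * l + b).
Proof.
move=> K0 [C C0 XC] YX; exists (K + `|a| * C) => [|n]; first by rewrite addr_ge0 ?mulr_ge0.
have -> : Y n - (a * l + b) * n%:R =
    (Y n - (a * X n + b * n%:R)) + a * (X n - l * n%:R) by ring.
rewrite mulrDl; apply: le_trans (ler_normD _ _) _; apply: lerD => //.
by rewrite normrM -mulrA ler_wpM2l.
Qed.

Definition trunc_square r (s : nat) : nat := Num.truncn (r * (s * s)%:R).

Lemma trunc_square_bounds r s : 0 <= r ->
  (trunc_square r s)%:R <= r * (s * s)%:R < (trunc_square r s)%:R + 1.
Proof.
move=> r0; have := truncn_itv (mulr_ge0 r0 (ler0n _ (s * s))).
by rewrite -/(trunc_square r s) -natr1.
Qed.

Lemma natr_sqS (s : nat) : ((s.+1 * s.+1)%:R : R) = (s * s)%:R + 2 * s%:R + 1.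
Proof. by rewrite !natrM -addn1 natrD; ring. Qed.

Lemma trunc_square0 r : trunc_square r 0 = 0%N.
Proof. by rewrite /trunc_square mul0n mulr0 truncn0. Qed.

Lemma trunc_square_mono r s : 0 <= r -> (trunc_square r s <= trunc_square r s.+1)%N.
Proof. by move=> r0; apply/le_truncn/ler_wpM2l => //; rewrite ler_nat; nia. Qed.

Lemma sqS_scale_le r (s : nat) : 0 <= r <= 1 ->
  r * (s.+1 * s.+1)%:R <= r * (s * s)%:R + 2 * s%:R + 1.
Proof.
case/andP=> r0 r1; rewrite natr_sqS.
have : 0 <= (1 - r) * (2 * s%:R + 1) by rewrite mulr_ge0 ?subr_ge0 ?addr_ge0.
by nra.
Qed.

Lemma trunc_square_step r s : 0 <= r <= 1 ->
  (trunc_square r s.+1 <= trunc_square r s + s.*2.+1)%N.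
Proof.
move=> r01; have /andP[r0 _] := r01.
have /andP[hi _] := trunc_square_bounds s.+1 r0.
have /andP[_ lo] := trunc_square_bounds s r0.
have := sqS_scale_le s r01.
rewrite -ltnS (_ : (_ + s.*2.+1).+1 = trunc_square r s + s * 2 + 2)%N; last by lia.
rewrite -(ltr_nat R) !natrD (natrM _ s 2).
lra.
Qed.

Section BlockWordDensity.
Variable r : R.
Hypothesis r01 : 0 <= r <= 1.

Local Notation block_word_r := (block_word (trunc_square r)).

Lemma near_linear_Zcount_block : near_linear (fun n => (Zcount block_word_r n)%:R) r.
Proof.
have /andP[r0 _] := r01.
have tr_mono s : (trunc_square r s <= trunc_square r s.+1)%N by exact: trunc_square_mono.
have tr_step s : (trunc_square r s.+1 <= trunc_square r s + s.*2.+1)%N.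
  exact: trunc_square_step.
exists 2 => // n; rewrite (Zcount_block_word (trunc_square0 r) tr_mono tr_step).
have /andP[lo hi] := sqrtn_bounds n; set s := Nat.sqrt n in lo hi *.
set z := (trunc_square r s + _)%N.
have ge_fs : (trunc_square r s)%:R <= z%:R :> R by rewrite ler_nat leq_addr.
have le_fs1 : z%:R <= (trunc_square r s.+1)%:R :> R.
  by rewrite ler_nat /z /block_zeros; have := tr_mono s; lia.
have /andP[_ fs_gt] := trunc_square_bounds s r0.
have /andP[fs1_le _] := trunc_square_bounds s.+1 r0.
have sq_le : r * (s * s)%:R <= r * n%:R by rewrite ler_wpM2l // ler_nat.
have le_sq : r * n%:R <= r * (s.+1 * s.+1)%:R by rewrite ler_wpM2l // ler_nat ltnW.
have := sqS_scale_le s r01.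
by rewrite ler_norml; lra.
Qed.

Lemma near_linear_Pcount_block : near_linear (fun n => (Pcount block_word_r n)%:R) r.
Proof.
rewrite -[X in near_linear _ X]addr0 -[X in near_linear _ (X + _)]mul1r.
apply: (near_linear_affine (K := 2)) near_linear_Zcount_block _ => // n.
have := Pcount_le_Zcount block_word_r n.
have := Zcount_le_Pcount_changes n (erefl : block_word_r 0 = true).
have := changes_block_word (trunc_square r) n.
rewrite -!(ler_nat R) !natrD -muln2 natrM mul1r mul0r addr0 ler_norml.
by lra.
Qed.

Lemma near_linear_Zcount_mask5 :
  near_linear (fun n => (Zcount (mask5 block_word_r) n)%:R) (3 / 5 * r + 2 / 5).
Proof.
apply: (near_linear_affine (K := 3)) near_linear_Zcount_block _ => // n.
have [lo hi] := Zcount_mask5 n (erefl : block_word_r 0 = true).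
have := changes_block_word (trunc_square r) n.
have := ler0n R (Nat.sqrt n).
move: lo hi; rewrite -!(ler_nat R) !natrD -!muln2 !natrM ler_norml.
by lra.
Qed.

Lemma near_linear_Pcount_mask5 :
  near_linear (fun n => (Pcount (mask5 block_word_r) n)%:R) r.
Proof.
rewrite [X in near_linear _ X](_ : r = 5 / 3 * (3 / 5 * r + 2 / 5) + - (2 / 3)); last by field.
apply: (near_linear_affine (K := 8)) near_linear_Zcount_mask5 _ => // n.
have := three_Pcount_mask5_le n (erefl : block_word_r 0 = true).
have := five_Zcount_le (mask5 block_word_r) n.
have := changes_block_word (trunc_square r) n.
have := ler0n R (Nat.sqrt n).
rewrite -!(ler_nat R) !natrD -!muln2 !natrM ler_norml.
by lra.
Qed.

End BlockWordDensity.

Lemma exists_word_P_dense r : 0 <= r <= 1 ->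
  exists w, zratio R w @ \oo --> r /\ pratio R w @ \oo --> r.
Proof.
move=> r01; exists (block_word (trunc_square r)).
by split; apply: near_linear_cvg; [exact: near_linear_Zcount_block | exact: near_linear_Pcount_block].
Qed.

Lemma exists_word_P_sparse r : 2 / 5 <= r <= 1 ->
  exists w, zratio R w @ \oo --> r /\ pratio R w @ \oo --> (5 * r - 2) / 3.
Proof.
case/andP=> r_ge r_le; set rho := (5 * r - 2) / 3.
have rho01 : 0 <= rho <= 1 by apply/andP; split; rewrite /rho; lra.
exists (mask5 (block_word (trunc_square rho))); split; apply: near_linear_cvg.
  rewrite [X in near_linear _ X](_ : r = 3 / 5 * rho + 2 / 5); last by rewrite /rho; field.
  exact: near_linear_Zcount_mask5.
exact: near_linear_Pcount_mask5.
Qed.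

End Densities.

Local Close Scope classical_set_scope.

Theorem theorem3p1 (R : realType) :
  (forall w : word,
      (5 * r_inf R w - 2) / 3 <= R_inf R w /\ R_inf R w <= r_inf R w /\
      (5 * r_sup R w - 2) / 3 <= R_sup R w /\ R_sup R w <= r_sup R w) /\
  (forall r : R, 2 / 5 <= r <= 1 ->
     exists w : word, r_inf R w = r /\ r_sup R w = r /\
       R_inf R w = (5 * r - 2) / 3 /\ R_sup R w = (5 * r - 2) / 3) /\
  (forall r : R, 0 <= r <= 1 ->
     exists w : word, r_inf R w = r /\ r_sup R w = r /\
       R_inf R w = r /\ R_sup R w = r).
Proof.
split; first exact: limn_ratios_bounds.
split=> r r_range.
- have [w [zr pr]] := exists_word_P_sparse r_range.
  by exists w; apply: limits_of_cvg.
- have [w [zr pr]] := exists_word_P_dense r_range.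
  by exists w; apply: limits_of_cvg.
Qed.
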